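(* Let $A_t$, $t\in I$ ($I$ an interval), be a solution of the ODE $\dot A_t=A_t[A_t,A_t^*]$ in $\mathfrak{gl}_n(\mathbb C)$. Then $t\mapsto\|A_t\|^2=\mathrm{tr}(A_tA_t^* )$ is monotonically non-increasing, and $\frac{d}{dt}\|A_t\|^2=0$ at a time $t$ if and only if $A_t$ is normal.
   Context: $A^*$ denotes the conjugate transpose (adjoint with respect to the standard Hermitian inner product on $\mathbb C^n$), $[X,Y]=XY-YX$, and $\|A\|^2=\mathrm{tr}(AA^* )$. *)

From HB Require Import structures.
From mathcomp Require Import all_boot all_order all_algebra.
From mathcomp Require Import all_classical all_reals all_analysis.
From mathcomp Require Import complex.
Set Implicit Arguments. Unset Strict Implicit. Unset Printing Implicit Defensive.
Import Order.TTheory GRing.Theory Num.Theory.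
Import numFieldNormedType.Exports.
Local Open Scope ring_scope.
Local Open Scope classical_set_scope.

Definition adjmx (R : rcfType) (n : nat) (A : 'M[R[i]]_n) : 'M[R[i]]_n :=
  (map_mx (@conjc R) A)^T.

Definition lie (R : rcfType) (n : nat) (X Y : 'M[R[i]]_n) : 'M[R[i]]_n :=
  X *m Y - Y *m X.

(* ||A||^2 = tr(A A^H), a nonnegative real number; we take its real part
   (its imaginary part is 0) so that it is an R-valued function. *)
Definition normsq (R : rcfType) (n : nat) (A : 'M[R[i]]_n) : R :=
  complex.Re (\tr (A *m adjmx A)).

Definition is_normal (R : rcfType) (n : nat) (A : 'M[R[i]]_n) : Prop :=
  A *m adjmx A = adjmx A *m A.

(* A : R -> gl_n(C) is differentiable at t with derivative D, entrywise and
   componentwise (real and imaginary parts), which is the usual derivative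
   of a function R -> C^{n x n} = R^{2 n^2}. *)
Definition mx_has_deriv (R : realType) (n : nat) (A : R -> 'M[R[i]]_n)
    (t : R) (D : 'M[R[i]]_n) : Prop :=
  forall i j : 'I_n,
    is_derive t (1 : R) (fun s => complex.Re (A s i j)) (complex.Re (D i j)) /\
    is_derive t (1 : R) (fun s => complex.Im (A s i j)) (complex.Im (D i j)).

Definition mx_continuous_within (R : realType) (n : nat) (I : set R)
    (A : R -> 'M[R[i]]_n) : Prop :=
  forall i j : 'I_n,
    {within I, continuous (fun s => complex.Re (A s i j))} /\
    {within I, continuous (fun s => complex.Im (A s i j))}.

(* Along the flow, d/dt ||A||^2 = 2 Re tr(A' A^* ) = 2 Re tr(A [A, A^*] A^* ).
   Cyclicity of the trace gives 2 tr(M [M, N] N) = - tr([M, N]^2) for any M, N,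
   and [A, A^*] is Hermitian, so tr([A, A^*]^2) = ||[A, A^*]||^2.  Hence the
   derivative is - ||[A, A^*]||^2 <= 0, which vanishes iff A commutes with A^*;
   monotonicity on the interval follows by the mean value theorem. *)

From HB Require Import structures.
From mathcomp Require Import all_boot all_order all_algebra.
From mathcomp Require Import all_classical all_reals all_analysis.
From mathcomp Require Import complex ring.
Import Order.TTheory GRing.Theory Num.Theory.
Import numFieldNormedType.Exports.
Local Open Scope ring_scope.
Local Open Scope classical_set_scope.

Lemma mxtrace_mul_commutator (R : comRingType) n (M N : 'M[R]_n) :
  \tr (M *m (M *m N - N *m M) *m N) *+ 2
    = - \tr ((M *m N - N *m M) *m (M *m N - N *m M)).
Proof.
have tr_rot (a b c d : 'M[R]_n) : \tr (a *m b *m c *m d) = \tr (b *m c *m d *m a).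
  by rewrite -!mulmxA mxtrace_mulC !mulmxA.
rewrite !(mulmxBr, mulmxBl) !(linearB, mulmxA) /=.
rewrite -(tr_rot M M N N) (tr_rot N M M N) (tr_rot N M N M).
by rewrite mulr2n; ring.
Qed.

Section ComplexMatrix.
Context {R : rcfType} {n : nat}.
Implicit Types (z w : R[i]) (X Y : 'M[R[i]]_n).

Lemma ReD : {morph @complex.Re R : z w / z + w}.
Proof. by move=> [a b] [c d]. Qed.

Lemma ReN : {morph @complex.Re R : z / - z}.
Proof. by move=> [a b]. Qed.

Lemma Re_mulJ z w :
  complex.Re (z * w^*) = complex.Re z * complex.Re w + complex.Im z * complex.Im w.
Proof. by case: z w => [a b] [c d] /=; rewrite mulrN opprK. Qed.

Definition mxdotR X Y := complex.Re (\tr (X *m adjmx Y)).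

Lemma mxdotRE X Y : mxdotR X Y =
  \sum_i \sum_j
    (complex.Re (X i j) * complex.Re (Y i j) + complex.Im (X i j) * complex.Im (Y i j)).
Proof.
rewrite /mxdotR /mxtrace (big_morph _ ReD (erefl _)); apply: eq_bigr => i _.
rewrite mxE (big_morph _ ReD (erefl _)); apply: eq_bigr => j _.
by rewrite /adjmx !mxE Re_mulJ.
Qed.

Lemma mxdotRC X Y : mxdotR X Y = mxdotR Y X.
Proof.
rewrite !mxdotRE; do 2 (apply: eq_bigr => ? _).
by rewrite [X in X + _]mulrC [X in _ + X]mulrC.
Qed.

Lemma normsqE X : normsq X =
  \sum_i \sum_j (complex.Re (X i j) ^+ 2 + complex.Im (X i j) ^+ 2).
Proof. by rewrite [normsq X]mxdotRE; do 2 (apply: eq_bigr => ? _); rewrite !expr2. Qed.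

Lemma normsq_ge0 X : 0 <= normsq X.
Proof. by rewrite normsqE; do 2 (apply: sumr_ge0 => ? _); rewrite addr_ge0 ?sqr_ge0. Qed.

Lemma normsq_eq0 X : (normsq X == 0) = (X == 0).
Proof.
apply/eqP/eqP => [|->]; last by rewrite /normsq mul0mx mxtrace0.
have sq_ge0 (a b : R) : 0 <= a ^+ 2 + b ^+ 2 by rewrite addr_ge0 ?sqr_ge0.
rewrite normsqE pair_bigA /= => /psumr_eq0P X0; apply/matrixP => i j.
move/eqP: (X0 (fun _ _ => sq_ge0 _ _) (i, j) isT); rewrite mxE.
case: (X i j) => a b /=.
by rewrite paddr_eq0 ?sqr_ge0 // !sqrf_eq0 => /andP[/eqP-> /eqP->].
Qed.

Lemma adjmxK : involutive (@adjmx R n).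
Proof. by move=> X; apply/matrixP => i j; rewrite /adjmx !mxE conjcK. Qed.

Lemma adjmxM X Y : adjmx (X *m Y) = adjmx Y *m adjmx X.
Proof. by rewrite /adjmx map_mxM trmx_mul. Qed.

Lemma adjmxB X Y : adjmx (X - Y) = adjmx X - adjmx Y.
Proof. by apply/matrixP => i j; rewrite /adjmx !mxE rmorphB. Qed.

Lemma adjmx_lie X Y : adjmx (lie X Y) = lie (adjmx Y) (adjmx X).
Proof. by rewrite /lie adjmxB !adjmxM. Qed.

Lemma mxdotR_mul_lie_adj X :
  mxdotR (X *m lie X (adjmx X)) X *+ 2 = - normsq (lie X (adjmx X)).
Proof.
rewrite /mxdotR mulr2n -ReD -mulr2n mxtrace_mul_commutator ReN.
by rewrite /normsq adjmx_lie adjmxK.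
Qed.

Lemma normsq_lie_adj_eq0 X : normsq (lie X (adjmx X)) = 0 <-> is_normal X.
Proof.
rewrite /is_normal; split=> [/eqP|XXJ]; first by rewrite normsq_eq0 subr_eq0 => /eqP.
by apply/eqP; rewrite normsq_eq0 /lie XXJ subrr.
Qed.

End ComplexMatrix.

Lemma is_derive_sum_fun {R : numFieldType} {V W : normedModType R} m
    (h : 'I_m -> V -> W) (x v : V) (dh : 'I_m -> W) :
  (forall i, is_derive x v (h i) (dh i)) ->
  is_derive x v (fun s => \sum_i h i s) (\sum_i dh i).
Proof.
move=> dh_i; have -> : (fun s => \sum_i h i s) = \sum_i h i.
  by apply/funext => s; rewrite fct_sumE.
exact: is_derive_sum.
Qed.

Section MatrixFlow.
Context {R : realType} {n : nat}.
Implicit Types (A B : R -> 'M[R[i]]_n).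

Lemma is_derive_mxdotR A B t DA DB :
  mx_has_deriv A t DA -> mx_has_deriv B t DB ->
  is_derive t 1 (fun s => mxdotR (A s) (B s)) (mxdotR DA (B t) + mxdotR (A t) DB).
Proof.
move=> dA dB; under eq_fun do rewrite mxdotRE.
rewrite !mxdotRE -big_split /=; apply: is_derive_sum_fun => i.
rewrite -big_split; apply: is_derive_sum_fun => j.
have [dReA dImA] := dA i j; have [dReB dImB] := dB i j.
apply: (is_derive_eq (is_deriveD (is_deriveM dReA dReB) (is_deriveM dImA dImB))).
rewrite /GRing.scale /=; ring.
Qed.

Lemma is_derive_normsq A t D : mx_has_deriv A t D ->
  is_derive t 1 (fun s => normsq (A s)) (mxdotR D (A t) *+ 2).
Proof.
by move=> dA; rewrite mulr2n {2}mxdotRC; apply: is_derive_mxdotR.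
Qed.

Lemma normsq_continuous_within (I : set R) A :
  mx_continuous_within I A -> {within I, continuous (fun s => normsq (A s))}.
Proof.
move=> cA; under eq_fun do rewrite [normsq _]mxdotRE.
apply: (continuous_big add_continuous) => i _.
apply: (continuous_big add_continuous) => j _.
have [cRe cIm] := cA i j.
move=> x; exact: continuousD (continuousM (cRe x) (cRe x)) (continuousM (cIm x) (cIm x)).
Qed.

End MatrixFlow.

Lemma ler0_derive1_le_interval {R : realType} (I : set R) (f : R -> R) :
  is_interval I -> {within I, continuous f} ->
  (forall t, I° t -> derivable f t 1) -> (forall t, I° t -> f^`() t <= 0) ->
  forall s t, I s -> I t -> s <= t -> f t <= f s.
Proof.
move=> Iint cf df f'_le0 s t Is It st.
have st_sub : `[s, t] `<=` I.
  by move=> x /=; rewrite in_itv /= => /andP[sx xt]; apply: (Iint s t); rewrite ?sx.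
have st_interior x : x \in `]s, t[%R -> I° x.
  by move=> x_st; apply: (interiorS st_sub); rewrite interior_itv_bnd.
have s_st : s \in `[s, t]%R by rewrite in_itv /= lexx st.
have t_st : t \in `[s, t]%R by rewrite in_itv /= lexx st.
have df_st x : x \in `]s, t[%R -> derivable f x 1 by move=> /st_interior; exact: df.
have f'_st x : x \in `]s, t[%R -> f^`() x <= 0 by move=> /st_interior; exact: f'_le0.
by apply: (ler0_derive1_le_cc df_st f'_st (continuous_subspaceW st_sub cf)).
Qed.

Theorem proposition4p4 (R : realType) (n : nat) (I : set R)
    (A : R -> 'M[R[i]]_n) :
  is_interval I ->
  mx_continuous_within I A ->
  (forall t : R, I° t -> mx_has_deriv A t (A t *m lie (A t) (adjmx (A t)))) ->
  (forall s t, I s -> I t -> s <= t -> normsq (A t) <= normsq (A s)) /\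
  (forall t : R, I° t ->
     derivable (fun s => normsq (A s)) t 1 /\
     ((fun s => normsq (A s))^`() t = 0 <-> is_normal (A t))).
Proof.
move=> Iint cA dA.
have d_normsq t : I° t ->
    is_derive t 1 (fun s => normsq (A s)) (- normsq (lie (A t) (adjmx (A t)))).
  by move=> It; rewrite -mxdotR_mul_lie_adj; apply: is_derive_normsq; exact: dA.
have derivable_normsq t : I° t -> derivable (fun s => normsq (A s)) t 1.
  by move=> /d_normsq [].
have normsq' t : I° t ->
    (fun s => normsq (A s))^`() t = - normsq (lie (A t) (adjmx (A t))).
  by move=> /d_normsq dt; rewrite derive1E derive_val.
split.
  apply: ler0_derive1_le_interval => //; first exact: normsq_continuous_within.
  by move=> t It; rewrite normsq' // oppr_le0 normsq_ge0.
move=> t It; split; first exact: derivable_normsq.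
rewrite normsq' // -normsq_lie_adj_eq0; split=> [/eqP|->]; last exact: oppr0.
by rewrite oppr_eq0 => /eqP.
Qed.
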